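(* Let $d$ be an odd integer. Then $U=\{(0,0)\}\cup\{(e,f)\in\mathcal{B}\mid f=d\}$ is maximal avoidable.
   Context: The bicyclic inverse semigroup is $\mathcal{B}=\{(a,b)\in\mathbb{Z}\times\mathbb{Z}\mid a\ge 0,\ a+b\ge 0\}$ with multiplication $(a,b)(c,d)=(\max\{c+d,a\}-d,\ b+d)$. A subset $U\subseteq\mathcal{B}$ is called avoidable if $\mathcal{B}$ can be partitioned into two subsets $A$ and $B$ such that no element of $U$ can be written as a product $xy$ of two distinct elements $x\neq y$ both in $A$, or both in $B$. A maximal avoidable set is an avoidable set not properly contained in any other avoidable subset of $\mathcal{B}$. *)

From Stdlib Require Import ZArith.
Open Scope Z_scope.

(* The bicyclic inverse semigroup B = {(a,b) in Z x Z | a >= 0, a + b >= 0}. *)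
Definition inB (p : Z * Z) : Prop := 0 <= fst p /\ 0 <= fst p + snd p.

Definition bmul (p q : Z * Z) : Z * Z :=
  (Z.max (fst q + snd q) (fst p) - snd q, snd p + snd q).

Definition subsetB (U : Z * Z -> Prop) : Prop := forall p, U p -> inB p.

Definition avoidable (U : Z * Z -> Prop) : Prop :=
  subsetB U /\
  exists A : Z * Z -> Prop,
    forall x y, inB x -> inB y -> x <> y -> (A x <-> A y) -> ~ U (bmul x y).

Definition maximal_avoidable (U : Z * Z -> Prop) : Prop :=
  avoidable U /\
  forall V : Z * Z -> Prop, subsetB V -> (forall p, U p -> V p) ->
    avoidable V -> forall p, V p -> U p.

From Stdlib Require Import ZArith Bool Lia Classical ssreflect.
Open Scope Z_scope.

(* Avoidability: colour each element of B by its row [snd].  Two distinct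
   elements with product (0,0) lie in rows h and -h with h <> 0, and a
   product in row d comes from rows h and d - h, so it suffices to colour Z
   so that h and -h (h <> 0), as well as h and d - h, get different colours.
   For odd d such a colouring is read off h mod d, with the multiples of d
   split by sign.

   Maximality: if V extends U and avoids a partition A, then any two elements
   u, v of the same row b get the same colour, since both u w and v w lie in
   row d for w in row d - b (and d - b <> b as d is odd).  So A is a colouring
   of the rows.  A new element (e,f) of V creates the edges 0 -- f (it is
   (0,0) (e,f)) and f - d -- d (it is a product of elements of these rows),
   which together with the edges f -- d - f -- f - d and d -- 0 coming from U
   close an odd cycle of length 5. *)

Lemma odd_ne_double (h d : Z) : Z.odd d = true -> h + h <> d.
Proof.
  move=> /Z.odd_spec [k ->]; lia.
Qed.

Lemma inB_bmul (x y : Z * Z) : inB x -> inB y -> inB (bmul x y).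
Proof.
  case: x => a b; case: y => c g; rewrite /inB /bmul /=; lia.
Qed.

Lemma snd_bmul (x y : Z * Z) : snd (bmul x y) = snd x + snd y.
Proof. by []. Qed.

Lemma bmul_1l (p : Z * Z) : inB p -> bmul (0, 0) p = p.
Proof.
  case: p => e f; rewrite /inB /bmul /= => Hp; f_equal; lia.
Qed.

Lemma bmul_eq_0 {x y : Z * Z} :
  inB x -> inB y -> x <> y -> bmul x y = (0, 0) -> snd x <> 0 /\ snd y = - snd x.
Proof.
  case: x => a b; case: y => c g; rewrite /inB /bmul /= => Hx Hy Hxy [= H1 H2].
  split; last lia.
  move=> Hb; apply: Hxy; f_equal; lia.
Qed.

Lemma bmul_factor_rows {d e f : Z} : d <> 0 -> inB (e, f) ->
  exists x y, inB x /\ inB y /\ x <> y /\ bmul x y = (e, f) /\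
    (snd x = f - d /\ snd y = d \/ snd x = d /\ snd y = f - d).
Proof.
  rewrite /inB /= => Hd Hp.
  (* At (0, 2d) with d > 0 the generic factorisation below is a square. *)
  case: (classic (e = 0 /\ f = 2 * d /\ 0 < d)) => [[-> [-> Hdpos]] | Hspecial].
  { exists (1, d), (0, d); rewrite /inB /bmul; cbn [fst snd].
    split; [lia | split; [lia | split; [move=> [=]; lia | split; [f_equal; lia |]]]].
    left; lia. }
  have [Hed | Hed] := Z.le_gt_cases 0 (e + d).
  - exists (Z.max 0 (d - f), f - d), (e, d); rewrite /inB /bmul; cbn [fst snd].
    split; [lia | split; [lia | split; [move=> [=]; lia | split; [f_equal; lia |]]]].
    by left.
  - exists (e + f - d, d), (Z.max 0 (d - f), f - d); rewrite /inB /bmul; cbn [fst snd].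
    split; [lia | split; [lia | split; [move=> [=]; lia | split; [f_equal; lia |]]]].
    by right.
Qed.

Section RowColouring.

Variable d : Z.
Hypothesis d_odd : Z.odd d = true.

Definition row_colour (h : Z) : bool :=
  if h mod d =? 0 then 0 <? h / d else 2 * (h mod d) <? d.

Lemma d_neq0 : d <> 0.
Proof. by move: d_odd => /[swap] ->. Qed.

Lemma row_colour_mul (q : Z) : row_colour (q * d) = (0 <? q).
Proof.
  by rewrite /row_colour Z.mod_mul ?Z.div_mul //; exact: d_neq0.
Qed.

(* The residue r of a non-multiple h is replaced by d - r in -h and in
   d - h, and 2 r <> d because d is odd. *)
Lemma row_colour_opp_residue (h : Z) :
  h mod d <> 0 -> row_colour (- h) <> row_colour h.
Proof.
  move=> Hr.
  have Hopp : (- h) mod d = d - h mod d by exact: Z_mod_nz_opp_full.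
  have Hr' : d - h mod d <> 0.
  { by rewrite -Hopp => /Z_mod_zero_opp_full; rewrite Z.opp_involutive. }
  rewrite /row_colour Hopp (proj2 (Z.eqb_neq _ _) Hr) (proj2 (Z.eqb_neq _ _) Hr').
  have := odd_ne_double (h mod d) d d_odd.
  case: (Z.ltb_spec (2 * (h mod d)) d); case: (Z.ltb_spec (2 * (d - h mod d)) d)
    => ? ? //; lia.
Qed.

Lemma row_colour_opp (h : Z) : h <> 0 -> row_colour (- h) <> row_colour h.
Proof.
  have [/Z.mod_divide [|q ->] | Hr] := Z.eq_dec (h mod d) 0.
  - exact: d_neq0.
  - rewrite -Z.mul_opp_l !row_colour_mul => /Z.neq_mul_0 [Hq _].
    case: (Z.ltb_spec 0 q); case: (Z.ltb_spec 0 (- q)) => ? ? //; lia.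
  - by move=> _; exact: row_colour_opp_residue.
Qed.

Lemma row_colour_sub (h : Z) : row_colour (d - h) <> row_colour h.
Proof.
  have [/Z.mod_divide [|q ->] | Hr] := Z.eq_dec (h mod d) 0.
  - exact: d_neq0.
  - have -> : d - q * d = (1 - q) * d by ring.
    rewrite !row_colour_mul.
    case: (Z.ltb_spec 0 q); case: (Z.ltb_spec 0 (1 - q)) => ? ? //; lia.
  - have -> : row_colour (d - h) = row_colour (- h).
    { rewrite /row_colour.
      have -> : (d - h) mod d = (- h) mod d.
      { by rewrite -(Z.mod_add (- h) 1 d d_neq0); f_equal; ring. }
      have -> : ((- h) mod d =? 0) = false.
      { apply/Z.eqb_neq => /Z_mod_zero_opp_full; by rewrite Z.opp_involutive. }
      by []. }
    exact: row_colour_opp_residue.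
Qed.

Definition Ud (p : Z * Z) : Prop := p = (0, 0) \/ (inB p /\ snd p = d).

Lemma Ud_avoidable : avoidable Ud.
Proof.
  split.
  { move=> p [-> | [Hp _]] //; rewrite /inB; cbn [fst snd]; lia. }
  exists (fun x => row_colour (snd x) = true).
  move=> x y Hx Hy Hxy /eq_iff_eq_true Hcol [Hxy0 | [_ Hrow]].
  - have [Hx0 Hyx] := bmul_eq_0 Hx Hy Hxy Hxy0.
    by have := row_colour_opp (snd x) Hx0; rewrite -Hyx Hcol.
  - rewrite snd_bmul in Hrow.
    by have := row_colour_sub (snd x); rewrite -Hrow Z.add_simpl_l Hcol.
Qed.

End RowColouring.

Lemma iff_of_not_iff2 {P Q R : Prop} : ~ (P <-> R) -> ~ (Q <-> R) -> (P <-> Q).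
Proof. by case: (classic P); case: (classic Q); tauto. Qed.

Lemma not_2colourable_5cycle (P0 P1 P2 P3 P4 : Prop) :
  ~ (P0 <-> P1) -> ~ (P1 <-> P2) -> ~ (P2 <-> P3) -> ~ (P3 <-> P4) ->
  ~ (P4 <-> P0) -> False.
Proof.
  move=> H01 H12 H23 H34; apply.
  have H02 : P0 <-> P2 by apply: (iff_of_not_iff2 H01) => ?; apply: H12; symmetry.
  have H24 : P2 <-> P4 by apply: (iff_of_not_iff2 H23) => ?; apply: H34; symmetry.
  tauto.
Qed.

Section Maximality.

Variables (d : Z) (V A : Z * Z -> Prop).
Hypothesis d_odd : Z.odd d = true.
Hypothesis V_subB : subsetB V.
Hypothesis Ud_sub_V : forall p, Ud d p -> V p.
Hypothesis A_separates :
  forall x y, inB x -> inB y -> x <> y -> (A x <-> A y) -> ~ V (bmul x y).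

Lemma V_bmul_row_d (x y : Z * Z) :
  inB x -> inB y -> snd x + snd y = d -> V (bmul x y).
Proof.
  move=> Hx Hy Hrow; apply: Ud_sub_V; right; split; first exact: inB_bmul.
  by rewrite snd_bmul.
Qed.

Lemma A_row_invariant {u v : Z * Z} :
  inB u -> inB v -> snd u = snd v -> (A u <-> A v).
Proof.
  case: u => a b; case: v => c g /= Hu Hv Hbg; subst g.
  pose w := (Z.max 0 (b - d), d - b).
  have Hw : inB w by rewrite /inB /w /=; lia.
  have Hb := odd_ne_double b d d_odd.
  apply: (iff_of_not_iff2 (R := A w)) => HA.
  - apply: (A_separates _ _ Hu Hw _ HA); first by move=> [= _]; lia.
    by apply: V_bmul_row_d => //=; lia.
  - apply: (A_separates _ _ Hv Hw _ HA); first by move=> [= _]; lia.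
    by apply: V_bmul_row_d => //=; lia.
Qed.

Definition col (h : Z) : Prop := A (Z.max 0 (- h), h).

Lemma inB_row_rep (h : Z) : inB (Z.max 0 (- h), h).
Proof. rewrite /inB /=; lia. Qed.

Lemma col_separates {x y : Z * Z} : inB x -> inB y -> x <> y ->
  V (bmul x y) -> ~ (col (snd x) <-> col (snd y)).
Proof.
  move=> Hx Hy Hxy HV Hcol; apply: (A_separates _ _ Hx Hy Hxy _ HV).
  rewrite (A_row_invariant Hx (inB_row_rep (snd x))) //.
  by rewrite (A_row_invariant Hy (inB_row_rep (snd y))).
Qed.

Lemma col_sub (h : Z) : ~ (col h <-> col (d - h)).
Proof.
  have Hh := odd_ne_double h d d_odd.
  apply: (col_separates (inB_row_rep h) (inB_row_rep (d - h))).
  - by move=> [= _]; lia.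
  - by apply: V_bmul_row_d; [exact: inB_row_rep.. | rewrite /=; ring].
Qed.

Lemma col_opp_neg (t : Z) : t < 0 -> ~ (col t <-> col (- t)).
Proof.
  move=> Ht; apply: (col_separates (x := (- t, t)) (y := (0, - t))).
  - rewrite /inB; cbn [fst snd]; lia.
  - rewrite /inB; cbn [fst snd]; lia.
  - by move=> [= _]; lia.
  - by apply: Ud_sub_V; left; rewrite /bmul; cbn [fst snd]; f_equal; lia.
Qed.

Lemma col_opp (t : Z) : t <> 0 -> ~ (col t <-> col (- t)).
Proof.
  move=> Ht; have [Hneg | Hpos] : t < 0 \/ 0 < t by lia.
  - exact: col_opp_neg.
  - move=> Hcol; apply: (col_opp_neg (- t)); first lia.
    by rewrite Z.opp_involutive; symmetry.
Qed.

Lemma col_factor_rows {e f : Z} : V (e, f) -> ~ (col (f - d) <-> col d).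
Proof.
  move=> Vp.
  have [x [y [Hx [Hy [Hxy [Hxyp Hrows]]]]]] :=
    bmul_factor_rows (d_neq0 d d_odd) (V_subB _ Vp).
  have Hsep := col_separates Hx Hy Hxy (eq_ind_r V Vp Hxyp).
  by case: Hrows => [[Hx' Hy'] | [Hx' Hy']] Hcol; apply: Hsep;
    rewrite Hx' Hy' //; symmetry.
Qed.

Lemma V_sub_Ud (p : Z * Z) : V p -> Ud d p.
Proof.
  case: p => e f Vp; case: (classic (Ud d (e, f))) => // HnU; exfalso.
  have Hp := V_subB _ Vp.
  have Hp0 : (0, 0) <> (e, f) by move=> Hp0; apply: HnU; left.
  have Hfd : f <> d by move=> Hfd; apply: HnU; right.
  have c0f : ~ (col 0 <-> col f).
  { apply: (col_separates (x := (0, 0)) (y := (e, f))) => //.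
    by rewrite bmul_1l. }
  have cft := col_sub f.
  have ctf : ~ (col (d - f) <-> col (f - d)).
  { have -> : f - d = - (d - f) by ring.
    by apply: col_opp; lia. }
  have cfd := col_factor_rows Vp.
  have cd0 : ~ (col d <-> col 0) by move=> H; apply: (col_sub 0); rewrite Z.sub_0_r; symmetry.
  exact: not_2colourable_5cycle c0f cft ctf cfd cd0.
Qed.

End Maximality.

Theorem proposition6p3 (d : Z) (hd : Z.odd d = true) :
  maximal_avoidable (fun p => p = (0, 0) \/ (inB p /\ snd p = d)).
Proof.
  split; first exact: Ud_avoidable.
  move=> V HVB HUV [_ [A HA]].
  exact: V_sub_Ud hd HVB HUV HA.
Qed.
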